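(* Let $G$ satisfy conditions (1)–(5) below, with $d$ vertices and genus $g$, and let $C_G\subset\mathbb{P}^{d-g}$ be the union of lines defined by an admissible labeling of $\tilde G$ (see context). Suppose $w$ is a vertex of degree $3$ whose edges are labeled $e_j$, $e_k$, $e_j-e_k$. If we interchange the labels $e_j$ and $e_j-e_k$ on the edges meeting at $w$, then the union of lines associated to the new labeling is the image of the original $C_G$ under a linear automorphism $\sigma$ of $\mathbb{P}^{d-g}$ that is an involution ($\sigma^2=\mathrm{id}$).
   Context: Work over an algebraically closed field $k$ of characteristic zero, $S=k[x_0,\ldots,x_{d-g}]$. Conditions on the finite graph $G=(V,E)$, $d=|V|$, $g=|E|-d+1$: (1) connected; (2) simple; (3) every vertex has degree at most $3$ and some vertex has degree less than $3$; (4) the shortest path between any two distinct vertices of degree $3$ has at least $3$ edges; (5) no triangles. Let $\tilde G$ be obtained from $G$ by attaching one loop at each vertex of degree $1$. An admissible labeling of the edges of $\tilde G$: for each vertex of degree $3$ choose two indices $j\neq k$ in $\{0,\ldots,d-g\}$ and label its three edges $e_j,e_k,e_j-e_k$; label each remaining edge $e_i$ with an unused index, distinct indices being used throughout. An index $i$ appears on an edge labeled $e_i$ or $\pm(e_i-e_j)$. For each vertex $v$: if $v$ has degree $3$ with edges $e_j,e_k,e_j-e_k$, $I_v=(x_i : i\neq j,k)$; otherwise $I_v$ is generated by the $x_i$ with $i$ not appearing on an edge of $\tilde G$ at $v$, together with $x_j-x_k$ if some edge at $v$ is labeled $e_j-e_k$. Then $L_v=V(I_v)$ is a line and $C_G=\bigcup_v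 L_v$. *)

From HB Require Import structures.
From mathcomp Require Import all_boot all_order all_algebra.
Set Implicit Arguments. Unset Strict Implicit. Unset Printing Implicit Defensive.
Import Order.TTheory GRing.Theory Num.Theory.

Section GraphDefs.
Variable V : finType.
Variable adj : rel V.

Definition deg (v : V) : nat := #|[set u | adj v u]|.

Definition gedges : {set {set V}} :=
  [set E | [exists u, exists v, adj u v && (E == [set u; v])]].

(** edges of G~ : edges of G plus one loop (a 1-element set {v}) at each
    vertex of degree 1 *)
Definition tedges : {set {set V}} :=
  gedges :|: [set E | [exists v, (deg v == 1%N) && (E == [set v])]].

Definition genus : nat := (#|gedges| + 1 - #|V|)%N.

Definition good_graph : Prop :=
  [/\ (forall u v, connect adj u v),
      symmetric adj /\ irreflexive adj,
      (forall v, deg v <= 3)%N /\ (exists v, deg v < 3)%N,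
      (forall u v, deg u = 3%N -> deg v = 3%N -> u != v ->
          ~~ adj u v /\ ~ (exists x, adj u x && adj x v))
    & (forall a b c, ~~ [&& adj a b, adj b c & adj c a])].
End GraphDefs.

(** labels: [Single i] is e_i, [Diff j k] is e_j - e_k *)
Inductive label (N : nat) : Type :=
| Single of 'I_N
| Diff of 'I_N & 'I_N.
Arguments Single {N}.
Arguments Diff {N}.

Section Labeling.
Variables (V : finType) (adj : rel V) (N : nat).
Variable lab : {set V} -> label N.

Definition appears (i : 'I_N) (l : label N) : Prop :=
  l = Single i \/ exists j, l = Diff i j \/ l = Diff j i.

Definition appears_at (v : V) (i : 'I_N) : Prop :=
  exists2 E, E \in tedges adj & v \in E /\ appears i (lab E).

Definition labels_at_are (v : V) (j k : 'I_N) : Prop :=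
  [/\ (forall E, E \in tedges adj -> v \in E ->
         lab E = Single j \/ lab E = Single k \/ lab E = Diff j k),
      (exists2 E, E \in tedges adj & v \in E /\ lab E = Single j),
      (exists2 E, E \in tedges adj & v \in E /\ lab E = Single k)
    & (exists2 E, E \in tedges adj & v \in E /\ lab E = Diff j k)].

Definition remaining (E : {set V}) : Prop :=
  E \in tedges adj /\ forall v, v \in E -> deg adj v <> 3%N.

Definition admissible : Prop :=
  exists c : V -> 'I_N * 'I_N,
  [/\ (forall v, deg adj v = 3%N ->
          (c v).1 <> (c v).2 /\ labels_at_are v (c v).1 (c v).2),
      (forall E, remaining E -> exists i, lab E = Single i),
      (forall v v', deg adj v = 3%N -> deg adj v' = 3%N -> v <> v' ->
          forall i, (i = (c v).1 \/ i = (c v).2) ->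
                    i <> (c v').1 /\ i <> (c v').2),
      (forall v E i, deg adj v = 3%N -> remaining E -> lab E = Single i ->
          i <> (c v).1 /\ i <> (c v).2)
    & (forall E E' i, remaining E -> remaining E' ->
          lab E = Single i -> lab E' = Single i -> E = E')].

(** the line L_v = V(I_v), as its affine cone in K^N *)
Definition on_line (K : fieldType) (v : V) (x : 'cV[K]_N) : Prop :=
  if deg adj v == 3%N then
    forall i, ~ appears_at v i -> x i ord0 = 0%R
  else
    (forall i, ~ appears_at v i -> x i ord0 = 0%R) /\
    (forall E j k, E \in tedges adj -> v \in E -> lab E = Diff j k ->
       x j ord0 = x k ord0).

Definition on_curve (K : fieldType) (x : 'cV[K]_N) : Prop :=
  exists v, on_line v x.
End Labeling.

Definition swap_labels (V : finType) (N : nat) (lab : {set V} -> label N)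
    (w : V) (j k : 'I_N) : {set V} -> label N :=
  fun E =>
    if w \in E then
      match lab E with
      | Single i => if i == j then Diff j k else Single i
      | Diff a b => if (a == j) && (b == k) then Single j else Diff a b
      end
    else lab E.

(* Let sigma be the involution x_k |-> x_j - x_k of K^N.  Vertex by vertex,
   the line of the new labeling is the image under sigma of the old one.  At w
   only the coordinates outside {j, k} are constrained, and sigma fixes them.
   A vertex with no edge to w keeps its labels, which by admissibility avoid j
   and k, so its line lies in x_j = x_k = 0, where sigma is the identity.  A
   neighbour v of w has degree < 3 by (4) and meets w in a single edge; its
   label e_j, e_k or e_j - e_k imposes x_k = 0, x_j = 0 or x_j = x_k, and
   exchanging e_j with e_j - e_k exchanges the first and last conditions exactly
   as sigma does, while the other edges at v avoid j and k. *)

From HB Require Import structures.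
From mathcomp Require Import all_boot all_order all_algebra.
Import Order.TTheory GRing.Theory Num.Theory.

Set Implicit Arguments.
Unset Strict Implicit.
Unset Printing Implicit Defensive.
Local Open Scope ring_scope.

Definition appearsb N (i : 'I_N) (l : label N) : bool :=
  match l with Single a => a == i | Diff a b => (a == i) || (b == i) end.

Lemma appearsP N (i : 'I_N) (l : label N) : reflect (appears i l) (appearsb i l).
Proof.
apply: (iffP idP).
- case: l => [a /eqP ->|a b /orP [/eqP ->|/eqP ->]]; first by left.
  + by right; exists b; left.
  + by right; exists a; right.
- by case=> [->|[a [->|->]]] /=; rewrite eqxx ?orbT.
Qed.

Definition jk_label N (j k : 'I_N) (l : label N) : Prop :=
  l = Single j \/ l = Single k \/ l = Diff j k.

Lemma appears_jk_label N (j k i : 'I_N) (l : label N) :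
  jk_label j k l -> appears i l -> i = j \/ i = k.
Proof.
by case=> [|[]] -> /appearsP /=; [move/eqP; left | move/eqP; right | case/orP=> /eqP; auto].
Qed.

Definition swap_label N (j k : 'I_N) (l : label N) : label N :=
  match l with
  | Single i => if i == j then Diff j k else Single i
  | Diff a b => if (a == j) && (b == k) then Single j else Diff a b
  end.

Lemma swap_labelsE (V : finType) N (lab : {set V} -> label N) w (j k : 'I_N) E :
  swap_labels lab w j k E = if w \in E then swap_label j k (lab E) else lab E.
Proof. by []. Qed.

Section SwapMatrix.
Variables (K : fieldType) (N : nat) (j k : 'I_N).
Hypothesis neq_jk : j != k.

Definition swap_mx : 'M[K]_N :=
  \matrix_(a, b) (if a == k then (b == j)%:R - (b == k)%:R else (a == b)%:R).

Lemma mul_swap_mx p (B : 'M[K]_(N, p)) a b :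
  (swap_mx *m B) a b = if a == k then B j b - B k b else B a b.
Proof.
rewrite mxE; under eq_bigr do rewrite mxE.
have sum_delta (c : 'I_N) : \sum_(t < N) (c == t)%:R * B t b = B c b.
  rewrite (bigD1 c) //= eqxx mul1r big1 ?addr0 // => t.
  by rewrite eq_sym => /negPf ->; rewrite mul0r.
case: eqP => [_|/eqP _]; last exact: sum_delta.
under eq_bigr do rewrite mulrBl.
by rewrite sumrB; congr (_ - _); rewrite -sum_delta; apply: eq_bigr => t _; rewrite eq_sym.
Qed.

Lemma swap_mxK : swap_mx *m swap_mx = 1%:M.
Proof.
apply/matrixP => a b; rewrite mul_swap_mx !mxE (negPf neq_jk) eqxx.
have [-> | //] := eqVneq a k.
by rewrite (eq_sym b j) (eq_sym b k) opprB addrC subrK.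
Qed.

Lemma swap_mx_unit : swap_mx \in unitmx.
Proof. exact: (mulmx1_unit swap_mxK).1. Qed.

Lemma swap_mx_j (x : 'cV[K]_N) : (swap_mx *m x) j ord0 = x j ord0.
Proof. by rewrite mul_swap_mx (negPf neq_jk). Qed.

Lemma swap_mx_k (x : 'cV[K]_N) : (swap_mx *m x) k ord0 = x j ord0 - x k ord0.
Proof. by rewrite mul_swap_mx eqxx. Qed.

Lemma swap_mx_id (x : 'cV[K]_N) i : i != k -> (swap_mx *m x) i ord0 = x i ord0.
Proof. by move=> /negPf ik; rewrite mul_swap_mx ik. Qed.

Lemma swap_mx_fixed (x : 'cV[K]_N) : x j ord0 = 0 -> x k ord0 = 0 -> swap_mx *m x = x.
Proof.
move=> xj0 xk0; apply/matrixP => a b; rewrite [b]ord1 mul_swap_mx.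
by case: eqP => // ->; rewrite xj0 xk0 subr0.
Qed.

End SwapMatrix.

Arguments swap_mx K {N}.

Section SwapLabelMatrix.
Variables (K : fieldType) (N : nat) (j k : 'I_N).
Hypothesis neq_jk : j != k.
Local Notation M := (swap_mx K j k).

Lemma jk_label_swap l : jk_label j k l -> jk_label j k (swap_label j k l).
Proof.
by rewrite /jk_label => -[|[]] -> /=; rewrite ?eqxx ?(eq_sym k j) ?(negPf neq_jk); auto.
Qed.

Definition edge_cond (l : label N) (x : 'cV[K]_N) : Prop :=
  [/\ ~~ appearsb j l -> x j ord0 = 0, ~~ appearsb k l -> x k ord0 = 0
    & forall a b, l = Diff a b -> x a ord0 = x b ord0].

Lemma edge_cond_swap l (x : 'cV[K]_N) : jk_label j k l ->
  edge_cond (swap_label j k l) x <-> edge_cond l (M *m x).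
Proof.
rewrite /edge_cond swap_mx_j // swap_mx_k //.
have kj : (k == j) = false by rewrite eq_sym (negPf neq_jk).
case=> [|[]] -> /=; rewrite !eqxx ?kj ?(negPf neq_jk) /= ?eqxx ?kj ?(negPf neq_jk) /=.
- split=> [[_ _ /(_ j k erefl) ->] | [_ /(_ isT) /eqP]]; first by split=> // _; rewrite subrr.
  by rewrite subr_eq0 => /eqP xjk; split=> // _ _ [<- <-].
- by split=> -[xj0 _ _].
- split=> [[_ /(_ isT) xk0 _] | [_ _ /(_ j k erefl)]].
    by split=> // _ _ [<- <-]; rewrite swap_mx_j // swap_mx_k // xk0 subr0.
  rewrite swap_mx_j // swap_mx_k // => /eqP.
  by rewrite -subr_eq0 opprB addrC subrK => /eqP xk0; split.
Qed.

End SwapLabelMatrix.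

Section LocalConditions.
Variables (K : fieldType) (V : finType) (adj : rel V) (N : nat).
Implicit Types (L : {set V} -> label N) (u v : V) (E : {set V}) (x : 'cV[K]_N).

Lemma tedges_pair E u v : symmetric adj -> E \in tedges adj ->
  u \in E -> v \in E -> u != v -> adj u v /\ E = [set u; v].
Proof.
move=> adj_sym; rewrite inE => /orP [].
- rewrite inE => /existsP [a /existsP [b /andP [ab /eqP ->]]].
  rewrite !inE => /orP [/eqP -> | /eqP ->] /orP [/eqP -> | /eqP ->]; rewrite ?eqxx //.
  by move=> _; rewrite setUC adj_sym.
- by rewrite inE => /existsP [t /andP [_ /eqP ->]]; rewrite !inE => /eqP -> /eqP ->; rewrite eqxx.
Qed.

Lemma eq_appears_at L1 L2 v :
  (forall E, E \in tedges adj -> v \in E -> L1 E = L2 E) ->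
  forall i, appears_at adj L1 v i <-> appears_at adj L2 v i.
Proof.
move=> eqL i; split=> -[E HE [vE iE]]; exists E => //; split => //.
  by rewrite -eqL.
by rewrite eqL.
Qed.

Lemma eq_on_line L1 L2 v x :
  (forall E, E \in tedges adj -> v \in E -> L1 E = L2 E) ->
  on_line adj L1 v x <-> on_line adj L2 v x.
Proof.
move=> eqL; have eqA := eq_appears_at eqL.
have eqZ : (forall i, ~ appears_at adj L1 v i -> x i ord0 = 0) <->
           (forall i, ~ appears_at adj L2 v i -> x i ord0 = 0).
  by split=> Z i Ai; apply: Z => /eqA.
have eqD : (forall E a b, E \in tedges adj -> v \in E -> L1 E = Diff a b -> x a ord0 = x b ord0) <->
           (forall E a b, E \in tedges adj -> v \in E -> L2 E = Diff a b -> x a ord0 = x b ord0).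
  by split=> D E a b HE vE LE; apply: (D E) => //; rewrite ?eqL // -eqL.
rewrite /on_line; case: (deg adj v == 3%N) => //; tauto.
Qed.

Lemma on_line_zero L v x i :
  on_line adj L v x -> ~ appears_at adj L v i -> x i ord0 = 0.
Proof. by rewrite /on_line; case: (deg adj v == 3%N) => [|[]] Z *; apply: Z. Qed.

End LocalConditions.

Section SwapAtVertex.
Variables (K : fieldType) (V : finType) (adj : rel V) (N : nat).
Variables (lab : {set V} -> label N) (w : V) (j k : 'I_N).
Hypothesis neq_jk : j != k.
Hypothesis adj_sym : symmetric adj.
Hypothesis deg3_nonadj :
  forall u v, deg adj u = 3%N -> deg adj v = 3%N -> u != v -> ~~ adj u v.
Hypothesis deg_w : deg adj w = 3%N.
Hypothesis labels_w : labels_at_are adj lab w j k.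
Hypothesis jk_off_w : forall E i, E \in tedges adj -> w \notin E ->
  appears i (lab E) -> i != j /\ i != k.

Local Notation lab' := (swap_labels lab w j k).
Local Notation M := (swap_mx K j k).
Implicit Types (E : {set V}) (x : 'cV[K]_N).

Lemma swap_labels_off_w E : w \notin E -> lab' E = lab E.
Proof. by rewrite swap_labelsE => /negPf ->. Qed.

Lemma jk_label_at_w E : E \in tedges adj -> w \in E -> jk_label j k (lab E).
Proof. by case: labels_w => labs_w _ _ _; apply: labs_w. Qed.

Lemma jk_label_swap_at_w E : E \in tedges adj -> w \in E -> jk_label j k (lab' E).
Proof. by move=> HE wE; rewrite swap_labelsE wE; apply/jk_label_swap/jk_label_at_w. Qed.

Lemma appears_at_w L : (forall E, E \in tedges adj -> w \in E -> jk_label j k (L E)) ->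
  appears_at adj L w j -> appears_at adj L w k ->
  forall i, ~ appears_at adj L w i <-> i != j /\ i != k.
Proof.
move=> jkL Aj Ak i; split=> [nAi | [ij ik] [E HE [wE /(appears_jk_label (jkL E HE wE))]]].
  by split; apply/eqP => eqi; apply: nAi; rewrite eqi.
by case=> eqi; [move: ij | move: ik]; rewrite eqi eqxx.
Qed.

Lemma on_line_swap_w x : on_line adj lab' w x <-> on_line adj lab w (M *m x).
Proof.
have [_ [E1 HE1 [wE1 E1j]] [E2 HE2 [wE2 E2k]] _] := labels_w.
have kj : (k == j) = false by rewrite eq_sym (negPf neq_jk).
have nA : forall i, ~ appears_at adj lab w i <-> i != j /\ i != k.
  apply: appears_at_w jk_label_at_w _ _; [exists E1 | exists E2] => //.
    by rewrite E1j; split=> //; left.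
  by rewrite E2k; split=> //; left.
have nA' : forall i, ~ appears_at adj lab' w i <-> i != j /\ i != k.
  apply: appears_at_w jk_label_swap_at_w _ _; [exists E1 | exists E2] => //; split=> //.
    by rewrite swap_labelsE wE1 E1j /= eqxx; right; exists k; left.
  by rewrite swap_labelsE wE2 E2k /= kj; left.
rewrite /on_line deg_w eqxx.
split=> Z i; [move=> /nA [ij ik] | move=> /nA' [ij ik]].
  by rewrite swap_mx_id //; apply: Z; apply/nA'.
by rewrite -(swap_mx_id j x ik); apply: Z; apply/nA.
Qed.

Lemma on_line_swap_far v x : (forall E, E \in tedges adj -> v \in E -> w \notin E) ->
  on_line adj lab' v x <-> on_line adj lab v (M *m x).
Proof.
move=> far.
have nA i : i = j \/ i = k -> ~ appears_at adj lab v i.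
  move=> eqi [E HE [vE /(jk_off_w HE (far E HE vE))] [ij ik]].
  by case: eqi => eqi; [move: ij | move: ik]; rewrite eqi eqxx.
apply: (iff_trans (eq_on_line _ (L2 := lab) _)).
  by move=> E HE /(far E HE) /swap_labels_off_w.
split=> Lx.
  by rewrite swap_mx_fixed //; apply: (on_line_zero Lx); apply: nA; [left | right].
have xj0 : x j ord0 = 0.
  by rewrite -(swap_mx_j neq_jk); apply: (on_line_zero Lx); apply: nA; left.
have xk0 : x k ord0 = 0.
  have : (M *m x) k ord0 = 0 by apply: (on_line_zero Lx); apply: nA; right.
  by rewrite swap_mx_k xj0 sub0r => /eqP; rewrite oppr_eq0 => /eqP.
by rewrite swap_mx_fixed in Lx.
Qed.

Section NeighbourOfW.
Variables (v : V) (E0 : {set V}).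
Hypotheses (E0_edge : E0 \in tedges adj) (v_E0 : v \in E0) (w_E0 : w \in E0).
Hypothesis neq_vw : v != w.

Lemma edge_vw_unique E : E \in tedges adj -> v \in E -> w \in E -> E = E0.
Proof.
move=> HE vE wE; rewrite (tedges_pair adj_sym HE vE wE neq_vw).2.
by rewrite (tedges_pair adj_sym E0_edge v_E0 w_E0 neq_vw).2.
Qed.

Lemma deg_neighbour_w : deg adj v != 3%N.
Proof.
apply/eqP => deg_v; have := deg3_nonadj deg_w deg_v; rewrite eq_sym => /(_ neq_vw).
by rewrite adj_sym (tedges_pair adj_sym E0_edge v_E0 w_E0 neq_vw).1.
Qed.

Definition appears_away i := exists2 E, E \in tedges adj &
  [/\ v \in E, w \notin E & appears i (lab E)].

(* The conditions imposed at v by its edges other than the one to w; they do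
   not involve the coordinates x_j, x_k. *)
Definition away_cond x : Prop :=
  (forall i, i != j -> i != k -> ~ appears_away i -> x i ord0 = 0) /\
  (forall E a b, E \in tedges adj -> v \in E -> w \notin E -> lab E = Diff a b ->
     x a ord0 = x b ord0).

Lemma away_cond_swap_mx x : away_cond (M *m x) <-> away_cond x.
Proof.
have off_k E a b : E \in tedges adj -> w \notin E -> lab E = Diff a b -> a != k /\ b != k.
  move=> HE wE Eab; have off_k i : appears i (lab E) -> i != k by case/(jk_off_w HE wE).
  by split; apply: off_k; rewrite Eab; right; [exists b; left | exists a; right].
rewrite /away_cond; split=> -[Z D]; split.
- by move=> i ij ik nR; rewrite -(swap_mx_id j x ik); apply: Z.
- move=> E a b HE vE wE Eab; have [ak bk] := off_k E a b HE wE Eab.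
  by rewrite -(swap_mx_id j x ak) -(swap_mx_id j x bk); apply: (D E).
- by move=> i ij ik nR; rewrite swap_mx_id //; apply: Z.
- move=> E a b HE vE wE Eab; have [ak bk] := off_k E a b HE wE Eab.
  by rewrite !swap_mx_id //; apply: (D E).
Qed.

Lemma appears_at_neighbour L : (forall E, w \notin E -> L E = lab E) ->
  forall i, appears_at adj L v i <-> appears i (L E0) \/ appears_away i.
Proof.
move=> L_off i; split.
- case=> E HE [vE iE]; have [wE | wE] := boolP (w \in E).
    by left; rewrite -(edge_vw_unique HE vE wE).
  by right; exists E => //; rewrite -L_off.
- case=> [iE0 | [E HE [vE wE iE]]]; first by exists E0.
  by exists E => //; rewrite L_off.
Qed.

Lemma on_line_neighbour L x : (forall E, w \notin E -> L E = lab E) ->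
  jk_label j k (L E0) -> on_line adj L v x <-> edge_cond j k (L E0) x /\ away_cond x.
Proof.
move=> L_off jkL0; have A := appears_at_neighbour L_off.
have away_jk i : appears_away i -> i != j /\ i != k.
  by case=> E HE [_ wE iE]; apply: jk_off_w HE wE iE.
rewrite /on_line (negPf deg_neighbour_w).
split=> [[Z D] | [[Zj Zk D0] [Zaway Daway]]].
- split; first split.
  + move=> /negP nj; apply: Z => /A [/appearsP // | /away_jk []]; by rewrite eqxx.
  + move=> /negP nk; apply: Z => /A [/appearsP // | /away_jk []]; by rewrite eqxx.
  + by move=> a b L0; apply: (D E0).
  split.
  + move=> i ij ik nR; apply: Z => /A [/(appears_jk_label jkL0) [] eqi | //].
      by move: ij; rewrite eqi eqxx.
    by move: ik; rewrite eqi eqxx.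
  + by move=> E a b HE vE wE Eab; apply: (D E) => //; rewrite L_off.
- split.
  + move=> i; have [-> nA | ij] := eqVneq i j.
      by apply: Zj; apply/negP => /appearsP jE0; apply: nA; apply/A; left.
    have [-> nA | ik nA] := eqVneq i k.
      by apply: Zk; apply/negP => /appearsP kE0; apply: nA; apply/A; left.
    by apply: Zaway => // R; apply: nA; apply/A; right.
  + move=> E a b HE vE Eab; have [wE | wE] := boolP (w \in E).
      by apply: D0; rewrite -(edge_vw_unique HE vE wE).
    by apply: (Daway E) => //; rewrite -L_off.
Qed.

Lemma on_line_swap_neighbour x : on_line adj lab' v x <-> on_line adj lab v (M *m x).
Proof.
have jkE0 := jk_label_at_w E0_edge w_E0.
apply: (iff_trans (on_line_neighbour _ swap_labels_off_w (jk_label_swap_at_w E0_edge w_E0))).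
apply: iff_sym; apply: (iff_trans (on_line_neighbour _ (fun _ _ => erefl) jkE0)).
rewrite swap_labelsE w_E0.
have := edge_cond_swap neq_jk x jkE0; have := away_cond_swap_mx x; tauto.
Qed.

End NeighbourOfW.

Lemma on_line_swap_labels v x : on_line adj lab' v x <-> on_line adj lab v (M *m x).
Proof.
have [-> | neq_vw] := eqVneq v w; first exact: on_line_swap_w.
have [/exists_inP [E HE /andP [vE wE]] | ] := boolP [exists E in tedges adj, (v \in E) && (w \in E)].
  exact: on_line_swap_neighbour HE vE wE neq_vw x.
rewrite negb_exists_in => /forall_inP far; apply: on_line_swap_far => E HE vE.
by have := far E HE; rewrite vE.
Qed.

Lemma on_curve_swap_labels x : on_curve adj lab' x <-> on_curve adj lab (M *m x).
Proof. by split=> -[v Lv]; exists v; apply/on_line_swap_labels. Qed.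

End SwapAtVertex.

Lemma admissible_jk_off (V : finType) (adj : rel V) N (lab : {set V} -> label N)
    (w : V) (j k : 'I_N) :
  admissible adj lab -> deg adj w = 3%N -> labels_at_are adj lab w j k ->
  forall E i, E \in tedges adj -> w \notin E -> appears i (lab E) -> i != j /\ i != k.
Proof.
case=> c [c_deg3 c_rem c_disj c_rem_disj _] deg_w.
case=> _ [E1 HE1 [wE1 E1j]] [E2 HE2 [wE2 E2k]] _.
have [_ [labs_cw _ _ _]] := c_deg3 w deg_w.
have single_cw E l : E \in tedges adj -> w \in E -> lab E = Single l ->
    l = (c w).1 \/ l = (c w).2.
  by move=> HE wE El; apply: appears_jk_label (labs_cw E HE wE) _; rewrite El; left.
have off_cw i : i <> (c w).1 -> i <> (c w).2 -> i != j /\ i != k.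
  move=> i1 i2; split; apply/eqP => eqi.
    by case: (single_cw E1 j HE1 wE1 E1j); rewrite -eqi.
  by case: (single_cw E2 k HE2 wE2 E2k); rewrite -eqi.
move=> E i HE wE iE; have [rem | ] := boolP [forall v in E, deg adj v != 3%N].
  have remE : remaining adj E by split=> // v /(forall_inP rem) /eqP.
  have [l El] := c_rem E remE.
  move: iE; rewrite El => /appearsP /= /eqP eq_li; subst l.
  by case: (c_rem_disj w E i deg_w remE El); apply: off_cw.
rewrite negb_forall_in => /exists_inP [v vE /negPn /eqP deg_v].
have [_ [labs_cv _ _ _]] := c_deg3 v deg_v.
have neq_vw : v <> w by move=> eq_vw; move: wE; rewrite -eq_vw vE.
have [] := c_disj v w deg_v deg_w neq_vw i (appears_jk_label (labs_cv E HE vE) iE).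
exact: off_cw.
Qed.

Theorem lemma1p6 (K : closedFieldType) (V : finType) (adj : rel V) (n : nat)
    (lab : {set V} -> label n.+1) (w : V) (j k : 'I_n.+1) :
  [pchar K] =i pred0 ->
  good_graph adj ->
  n = (#|V| - genus adj)%N ->
  admissible adj lab ->
  deg adj w = 3%N -> j != k -> labels_at_are adj lab w j k ->
  exists M : 'M[K]_n.+1,
    [/\ M \in unitmx,
        (exists2 c : K, c != 0 & M *m M = c%:M)
      & forall x : 'cV[K]_n.+1, x != 0 ->
          (on_curve adj (swap_labels lab w j k) x <->
           exists y : 'cV[K]_n.+1, [/\ y != 0, on_curve adj lab y & x = M *m y])].
Proof.
move=> _ [_ [adj_sym _] _ deg3_far _] _ adm deg_w neq_jk labels_w.
have deg3_nonadj u v : deg adj u = 3%N -> deg adj v = 3%N -> u != v -> ~~ adj u v.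
  by move=> deg_u deg_v neq_uv; case: (deg3_far u v deg_u deg_v neq_uv).
have curveE := on_curve_swap_labels (K := K) neq_jk adj_sym deg3_nonadj deg_w labels_w
  (admissible_jk_off adm deg_w labels_w).
have swap_swap (x : 'cV[K]_n.+1) : swap_mx K j k *m (swap_mx K j k *m x) = x.
  by rewrite mulmxA swap_mxK // mul1mx.
exists (swap_mx K j k); split; first exact: swap_mx_unit.
  by exists 1; [exact: oner_neq0 | exact: swap_mxK].
move=> x x0; apply: (iff_trans (curveE x)); split=> [Cx | [y [_ Cy ->]]].
  exists (swap_mx K j k *m x); split; rewrite ?swap_swap //.
  by apply: contraNneq x0 => Mx0; rewrite -(swap_swap x) Mx0 mulmx0.
by rewrite swap_swap.
Qed.
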